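(* Let $P$ be a disjunctive program and $P_1,P_2,\dots$ a module sequence for $P$. Then $M$ is a stable model of $P$ if and only if there exists a sequence $M_1,M_2,\dots$ such that (1) for each $i\ge1$, $M_i$ is a stable model of $P_i$; (2) for each $i\ge 1$, $M_i=M_{i+1}\cap\mathit{atom}(P_i)$; (3) $M=\bigcup_{i\ge1}M_i$.
   Context: A disjunctive program is a set of rules $r$ of the form $A_1\vee\dots\vee A_m\leftarrow L_1,\dots,L_n$ ($m>0$, $n\ge0$), $A_j$ atoms, $L_i$ atoms or negated atoms $\mathtt{not}\,A$, possibly with function symbols; $head(r)=\{A_1,\dots,A_m\}$, $body^+(r)$ (resp. $body^-(r)$) is the set of atoms $A$ such that $A$ (resp. $\mathtt{not}\,A$) is among the $L_i$. $\mathsf{Ground}(P)$ is the ground instantiation of $P$; for a set $X$ of ground rules, $\mathit{atom}(X)$ is the set of ground atoms occurring in $X$. For a set of ground atoms $M$, the Gelfond–Lifschitz reduct $P^M$ is obtained from $\mathsf{Ground}(P)$ (for a ground program, from the program itself) by deleting every rule $r$ with $body^-(r)\cap M\neq\emptyset$ and deleting all negative literals from the remaining rules. $M$ is a stable model of $P$ iff $M$ is a minimal (w.r.t. set inclusion) Herbrand model of $P^M$. The dependency graph of $P$ has ground atoms as vertices and an edge $A\to B$ whenever for some $r\in\mathsf{Ground}(P)$, $A\in head(r)$ and $B$ occurs in $r$ (body or head); $A$ depends on $B$ if there is a directed path from $A$ to $B$ (every atom depends on itself). $GH$ is the set of ground atoms occurring in heads of rules in $\mathsf{Ground}(P)$;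 for an enumeration $p_1,p_2,\dots$ of $GH$, the induced module sequence is $P_1=\{r\in\mathsf{Ground}(P)\mid p_1\text{ depends on some }A\in head(r)\}$, $P_{i+1}=P_i\cup\{r\in\mathsf{Ground}(P)\mid p_{i+1}\text{ depends on some }A\in head(r)\}$. A module sequence for $P$ is one induced by some enumeration of $GH$. *)

From Stdlib Require Import List Relations.
Import ListNotations.

(* Terms: variables and function symbols (constants are 0-ary symbols).
   Symbol names are natural numbers. *)
Inductive term : Type :=
| Var (v : nat)
| Fn (f : nat) (args : list term).

Record atom : Type := Atom { pred : nat; targs : list term }.

Inductive literal : Type :=
| Pos (a : atom)
| Neg (a : atom).

(* A_1 v ... v A_m <- L_1, ..., L_n *)
Record rule : Type := Rule { head : list atom; body : list literal }.

Definition program := rule -> Prop.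
Definition atoms := atom -> Prop.

Definition is_disj_program (P : program) : Prop :=
  forall r, P r -> head r <> [].

Definition body_pos (r : rule) : atoms := fun a => In (Pos a) (body r).
Definition body_neg (r : rule) : atoms := fun a => In (Neg a) (body r).

Fixpoint pos_atoms (l : list literal) : list atom :=
  match l with
  | [] => []
  | Pos a :: l' => a :: pos_atoms l'
  | Neg _ :: l' => pos_atoms l'
  end.

Fixpoint tsubst (s : nat -> term) (t : term) : term :=
  match t with
  | Var v => s v
  | Fn f l => Fn f (map (tsubst s) l)
  end.

Definition asubst (s : nat -> term) (a : atom) : atom :=
  Atom (pred a) (map (tsubst s) (targs a)).

Definition lsubst (s : nat -> term) (l : literal) : literal :=
  match l with Pos a => Pos (asubst s a) | Neg a => Neg (asubst s a) end.

Definition rsubst (s : nat -> term) (r : rule) : rule :=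
  Rule (map (asubst s) (head r)) (map (lsubst s) (body r)).

Fixpoint sym_in_term (f n : nat) (t : term) : Prop :=
  match t with
  | Var _ => False
  | Fn g l => (g = f /\ length l = n) \/
      (fix any (l : list term) : Prop :=
         match l with [] => False | t :: l' => sym_in_term f n t \/ any l' end) l
  end.

Definition sym_in_atom (f n : nat) (a : atom) : Prop :=
  exists t, In t (targs a) /\ sym_in_term f n t.

Definition atom_in_rule (a : atom) (r : rule) : Prop :=
  In a (head r) \/ In (Pos a) (body r) \/ In (Neg a) (body r).

Definition sym_in_prog (P : program) (f n : nat) : Prop :=
  exists r a, P r /\ atom_in_rule a r /\ sym_in_atom f n a.

(* Function symbols of the Herbrand universe of P: those occurring in P,
   plus one arbitrary constant (the symbol 0 of arity 0) if P contains
   no constant. *)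
Definition herbrand_sym (P : program) (f n : nat) : Prop :=
  sym_in_prog P f n \/
  (f = 0 /\ n = 0 /\ ~ (exists c, sym_in_prog P c 0)).

Fixpoint ground_over (Q : nat -> nat -> Prop) (t : term) : Prop :=
  match t with
  | Var _ => False
  | Fn f l => Q f (length l) /\
      (fix all (l : list term) : Prop :=
         match l with [] => True | t :: l' => ground_over Q t /\ all l' end) l
  end.

Definition herbrand_universe (P : program) : term -> Prop :=
  ground_over (herbrand_sym P).

Definition Ground (P : program) : program :=
  fun r' => exists r s, P r /\ (forall v, herbrand_universe P (s v)) /\
                        r' = rsubst s r.

Definition atom_of (X : program) : atoms :=
  fun a => exists r, X r /\ atom_in_rule a r.

Definition reduct (X : program) (M : atoms) : program :=
  fun r' => exists r, X r /\ (forall a, body_neg r a -> ~ M a) /\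
                      r' = Rule (head r) (map Pos (pos_atoms (body r))).

Definition is_model (M : atoms) (X : program) : Prop :=
  forall r, X r ->
    (forall a, body_pos r a -> M a) ->
    (forall a, body_neg r a -> ~ M a) ->
    exists a, In a (head r) /\ M a.

Definition subset (N M : atoms) : Prop := forall a, N a -> M a.

Definition is_minimal_model (M : atoms) (X : program) : Prop :=
  is_model M X /\ forall N, subset N M -> is_model N X -> subset M N.

Definition stable_model_ground (X : program) (M : atoms) : Prop :=
  is_minimal_model M (reduct X M).

Definition stable_model (P : program) (M : atoms) : Prop :=
  stable_model_ground (Ground P) M.

Definition dep_edge (P : program) (A B : atom) : Prop :=
  exists r, Ground P r /\ In A (head r) /\ atom_in_rule B r.

Definition depends (P : program) : atom -> atom -> Prop :=
  clos_refl_trans atom (dep_edge P).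

Definition GH (P : program) : atoms :=
  fun A => exists r, Ground P r /\ In A (head r).

(* An enumeration p_1, p_2, ... of GH, indexed from 0 in Rocq
   (p 0 = p_1).  Every element listed is in GH and every element of GH is
   listed. *)
Definition is_enumeration (P : program) (p : nat -> atom) : Prop :=
  (forall n, GH P (p n)) /\ (forall A, GH P A -> exists n, p n = A).

(* the module sequence induced by p: induced_module P p i = P_{i+1} *)
Definition induced_module (P : program) (p : nat -> atom) (i : nat) : program :=
  fun r => Ground P r /\
           exists j A, j <= i /\ In A (head r) /\ depends P (p j) A.

Definition is_module_sequence (P : program) (Ps : nat -> program) : Prop :=
  exists p, is_enumeration P p /\
    forall i r, Ps i r <-> induced_module P p i r.

From Stdlib Require Import List Relations Classical Arith Lia.

(* A ground rule whose head meets atom(P_i) belongs to P_i, since its head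
   atoms are reachable from the one that put that atom into P_i.  So each
   P_i is a bottom part of Ground(P), closed under the rules that could
   derive its atoms.  Restricting a stable model M of Ground(P) to atom(P_i)
   then gives a stable model of P_i: a smaller model N of the reduct of P_i
   extends, by the atoms of M outside atom(P_i), to a smaller model of the
   reduct of Ground(P).  Conversely the modules cover Ground(P) and M,
   so a compatible family M_i glues: every rule and every atom of M is
   already seen by one module, where M agrees with M_i. *)

Definition reduct_model (N M : atoms) (X : program) : Prop :=
  forall r, X r -> (forall a, body_neg r a -> ~ M a) ->
    (forall a, body_pos r a -> N a) -> exists a, In a (head r) /\ N a.

Definition restrict (M : atoms) (X : program) : atoms :=
  fun a => M a /\ atom_of X a.

Lemma In_pos_atoms l a : In a (pos_atoms l) <-> In (Pos a) l.
Proof.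
  induction l as [|[b|b] l IH]; simpl; [tauto| |].
  - rewrite IH; split; intros [H|H]; auto; left; congruence.
  - rewrite IH; split; [auto | intros [H|H]; [discriminate | auto]].
Qed.

Lemma In_Pos_map_Pos xs a : In (Pos a) (map Pos xs) <-> In a xs.
Proof.
  induction xs; simpl; [tauto|]. rewrite IHxs.
  split; intros [H|H]; auto; left; congruence.
Qed.

Lemma Neg_notin_map_Pos xs a : ~ In (Neg a) (map Pos xs).
Proof. induction xs; simpl; [tauto|]. intros [H|H]; [discriminate | auto]. Qed.

Lemma is_model_reduct N M X : is_model N (reduct X M) <-> reduct_model N M X.
Proof.
  unfold is_model, reduct_model, reduct, body_pos, body_neg; split.
  - intros H r Xr Hneg Hpos.
    apply (H (Rule (head r) (map Pos (pos_atoms (body r))))); simpl.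
    + exists r; auto.
    + intros a Ha; apply Hpos, In_pos_atoms, In_Pos_map_Pos, Ha.
    + intros a Ha; exfalso; exact (Neg_notin_map_Pos _ _ Ha).
  - intros H r' [r [Xr [Hneg ->]]] Hpos _; simpl.
    apply H; auto. intros a Ha. apply Hpos; simpl.
    apply In_Pos_map_Pos, In_pos_atoms, Ha.
Qed.

Lemma stable_model_groundE X M : stable_model_ground X M <->
  reduct_model M M X /\
  forall N, subset N M -> reduct_model N M X -> subset M N.
Proof.
  unfold stable_model_ground, is_minimal_model.
  setoid_rewrite is_model_reduct. reflexivity.
Qed.

Lemma stable_model_ground_support X M :
  stable_model_ground X M -> subset M (atom_of X).
Proof.
  intros [HM Hmin]%stable_model_groundE a Ma.
  apply (Hmin (restrict M X)); auto; [intros b []; auto|].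
  intros r Xr Hneg Hpos.
  destruct (HM r Xr Hneg (fun b Hb => proj1 (Hpos b Hb))) as [b [Hb Mb]].
  exists b; repeat split; auto. exists r; split; auto; left; auto.
Qed.

Lemma atom_of_rule X r a : X r -> atom_in_rule a r -> atom_of X a.
Proof. intros Xr Ha; exists r; auto. Qed.

Definition bottom_part (U X : program) : Prop :=
  (forall r, U r -> X r) /\
  (forall r a, X r -> In a (head r) -> atom_of U a -> U r).

Lemma stable_model_ground_restrict U X M :
  bottom_part U X -> stable_model_ground X M ->
  stable_model_ground U (restrict M U).
Proof.
  intros [HUX Hclosed] [HM Hmin]%stable_model_groundE.
  apply stable_model_groundE; split.
  - intros r Ur Hneg Hpos.
    destruct (HM r (HUX r Ur)) as [a [Ha Ma]].
    + intros a Ha Ma. apply (Hneg a Ha). split; auto.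
      apply (atom_of_rule _ _ _ Ur). right; right; exact Ha.
    + intros a Ha; apply (Hpos a Ha).
    + exists a; repeat split; auto. apply (atom_of_rule _ _ _ Ur); left; exact Ha.
  - intros N HN HNmodel.
    set (N' := fun a => N a \/ (M a /\ ~ atom_of U a)).
    assert (HN'model : reduct_model N' M X).
    { intros r Xr Hneg Hpos.
      destruct (classic (exists a, In a (head r) /\ atom_of U a))
        as [[a [Ha Ua]] | Hout].
      - assert (Ur : U r) by exact (Hclosed r a Xr Ha Ua).
        destruct (HNmodel r Ur) as [b [Hb Nb]].
        + intros b Hb [Mb _]. exact (Hneg b Hb Mb).
        + intros b Hb. destruct (Hpos b Hb) as [Nb | [_ nUb]]; auto.
          exfalso; apply nUb, (atom_of_rule _ _ _ Ur). right; left; exact Hb.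
        + exists b; split; [exact Hb | left; exact Nb].
      - destruct (HM r Xr Hneg) as [b [Hb Mb]].
        + intros b Hb. destruct (Hpos b Hb) as [Nb | [Mb _]]; auto.
          exact (proj1 (HN b Nb)).
        + exists b; split; [exact Hb | right; split; auto].
          intros Ub; apply Hout; exists b; auto. }
    assert (HN'M : subset N' M) by (intros a [Na | [Ma _]]; [apply HN |]; auto).
    intros a [Ma Ua].
    destruct (Hmin N' HN'M HN'model a Ma) as [Na | [_ nUa]]; [exact Na | contradiction].
Qed.

(* The subprograms [U i] need not be nested: coverage of the rules and of
   the atoms of [M] suffices. *)
Lemma stable_model_ground_glue (X : program) (I : Type) (U : I -> program)
  (Ms : I -> atoms) (M : atoms) :
  (forall i r, U i r -> X r) ->
  (forall r, X r -> exists i, U i r) ->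
  (forall a, M a -> exists i, atom_of (U i) a) ->
  (forall i a, Ms i a <-> restrict M (U i) a) ->
  (forall i, stable_model_ground (U i) (Ms i)) ->
  stable_model_ground X M.
Proof.
  intros HUX Hrules Hatoms HMs HU.
  apply stable_model_groundE; split.
  - intros r Xr Hneg Hpos.
    destruct (Hrules r Xr) as [i Ur].
    destruct (proj1 (proj1 (stable_model_groundE _ _) (HU i)) r Ur)
      as [a [Ha [Ma _]%HMs]].
    + intros a Ha [Ma _]%HMs. exact (Hneg a Ha Ma).
    + intros a Ha. apply HMs; split; [exact (Hpos a Ha)|].
      apply (atom_of_rule _ _ _ Ur). right; left; exact Ha.
    + exists a; auto.
  - intros N HN HNmodel a Ma.
    destruct (Hatoms a Ma) as [i Ua].
    destruct (proj1 (stable_model_groundE _ _) (HU i)) as [_ Hmin].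
    apply (Hmin (restrict N (U i))); [| | apply HMs; split; auto].
    + intros b [Nb Ub]; apply HMs; split; auto.
    + intros r Ur Hneg Hpos.
      destruct (HNmodel r (HUX i r Ur)) as [b [Hb Nb]].
      * intros b Hb Mb. apply (Hneg b Hb), HMs. split; auto.
        apply (atom_of_rule _ _ _ Ur). right; right; exact Hb.
      * intros b Hb; apply (Hpos b Hb).
      * exists b; repeat split; auto. apply (atom_of_rule _ _ _ Ur); left; exact Hb.
Qed.

(* Condition (2) alone forces [Ms i] into [A i]; with nested [A i] the
   family is then determined by its union. *)
Lemma compatible_family_restrict (A Ms : nat -> atoms) (M : atoms) :
  (forall i a, A i a -> A (S i) a) ->
  (forall i a, Ms i a <-> Ms (S i) a /\ A i a) ->
  (forall a, M a <-> exists i, Ms i a) ->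
  forall i a, Ms i a <-> M a /\ A i a.
Proof.
  intros HA HMs HM.
  assert (Hup : forall i j a, i <= j -> Ms i a -> Ms j a).
  { intros i j a Hij; induction Hij; auto. intros Hi; apply (HMs m), IHHij, Hi. }
  assert (HAup : forall i j a, i <= j -> A i a -> A j a).
  { intros i j a Hij; induction Hij; auto. }
  assert (Hdown : forall i j a, i <= j -> Ms j a -> A i a -> Ms i a).
  { intros i j a Hij; induction Hij; auto.
    intros Hm Ai. apply IHHij; auto. apply HMs; split; eauto. }
  intros i a; split.
  - intros Hi. split; [apply HM; exists i; exact Hi | apply (HMs i a), Hi].
  - intros [[j Hj]%HM Ai].
    destruct (le_lt_dec j i); [apply (Hup j) | apply (Hdown i j)]; auto; lia.
Qed.

Section ModuleSequence.

Variables (P : program) (p : nat -> atom) (Ps : nat -> program).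
Hypothesis Hdisj : is_disj_program P.
Hypothesis Henum : is_enumeration P p.
Hypothesis HPs : forall i r, Ps i r <-> induced_module P p i r.

Lemma module_sub_Ground i r : Ps i r -> Ground P r.
Proof. intros Hr; apply HPs in Hr; apply Hr. Qed.

Lemma module_succ i r : Ps i r -> Ps (S i) r.
Proof.
  intros [Hg [j [A [Hj HA]]]]%HPs. apply HPs.
  split; [exact Hg | exists j, A; split; [lia | exact HA]].
Qed.

Lemma module_atom_of_succ i a : atom_of (Ps i) a -> atom_of (Ps (S i)) a.
Proof. intros [r [Hr Ha]]. exists r; split; [apply module_succ, Hr | exact Ha]. Qed.

Lemma module_bottom_part i : bottom_part (Ps i) (Ground P).
Proof.
  split; [apply module_sub_Ground|].
  intros r a Hg Ha [r' [Hr' Hin]].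
  apply HPs in Hr' as [Hg' [j [A [Hj [HA Hdep]]]]].
  apply HPs; split; [exact Hg|].
  exists j, a; repeat split; auto.
  eapply rt_trans; [exact Hdep|]. apply rt_step. exists r'; auto.
Qed.

(* Here the disjunctive hypothesis is used: a rule with empty head would lie
   in no module. *)
Lemma module_cover r : Ground P r -> exists i, Ps i r.
Proof.
  intros Hg. pose proof Hg as [r0 [s [Hr0 [_ ->]]]].
  destruct (head r0) as [|a hs] eqn:Eh; [exfalso; exact (Hdisj r0 Hr0 Eh)|].
  assert (Ha : In (asubst s a) (head (rsubst s r0))) by (simpl; rewrite Eh; left; auto).
  destruct (proj2 Henum (asubst s a)) as [n Hn]; [exists (rsubst s r0); auto|].
  exists n; apply HPs; split; [exact Hg|].
  exists n, (asubst s a); repeat split; auto. rewrite Hn; apply rt_refl.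
Qed.

End ModuleSequence.

(* Index i in Rocq corresponds to index i+1 in the paper. *)
Theorem theorem3p6 (P : program) (Ps : nat -> program) :
  is_disj_program P ->
  is_module_sequence P Ps ->
  forall M : atoms,
    stable_model P M <->
    exists Ms : nat -> atoms,
      (forall i, stable_model_ground (Ps i) (Ms i)) /\
      (forall i a, Ms i a <-> (Ms (S i) a /\ atom_of (Ps i) a)) /\
      (forall a, M a <-> exists i, Ms i a).
Proof.
  intros Hdisj [p [Henum HPs]] M.
  pose proof (module_sub_Ground P p Ps HPs) as Hsub.
  pose proof (module_cover P p Ps Hdisj Henum HPs) as Hcover.
  pose proof (module_atom_of_succ P p Ps HPs) as Hatom_succ.
  split.
  - intros HM. exists (fun i => restrict M (Ps i)); split; [|split].
    + intros i. apply (stable_model_ground_restrict _ _ _ (module_bottom_part P p Ps HPs i) HM).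
    + intros i a; unfold restrict; split; [|tauto].
      intros [Ma Ua]; repeat split; auto.
    + intros a; split; [|intros [i [Ma _]]; exact Ma].
      intros Ma. destruct (stable_model_ground_support _ _ HM a Ma) as [r [Hg Ha]].
      destruct (Hcover r Hg) as [i Hi]. exists i; split; [exact Ma | exists r; auto].
  - intros [Ms [Hstable [Hcompat HM]]].
    pose proof (compatible_family_restrict _ _ _ Hatom_succ Hcompat HM) as HMsE.
    apply (stable_model_ground_glue _ nat Ps Ms M Hsub Hcover); [| exact HMsE | exact Hstable].
    intros a [i Hi]%HM. exists i. apply (proj1 (HMsE i a)), Hi.
Qed.
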